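(* Assume hypothesis (A). For every $i\in\{1,\dots,d\}$ and $s\in(-1,+\infty)$, the system of equations $$e^{\alpha^i}=1+s,\qquad e^{\alpha^j}=\sum_{k=1}^dp_{jk}e^{\alpha^k}+p_{j0},\quad j\in\{1,\dots,d\}\setminus\{i\},$$ in $\alpha=(\alpha^1,\dots,\alpha^d)\in\mathbb{R}^d$ has a unique solution $\alpha(s)$, given by $\alpha^i(s)=\log(1+s)$ and $\alpha^j(s)=\log(1+Q_{ji}s)$ for $j\ne i$. Moreover, for every $\Lambda\subset\{1,\dots,d\}$, $$R_\Lambda(\alpha(s))=\frac{s}{G_{ii}}\Bigl(\nu_i-\frac{\mu_i}{1+s}\mathbf{1}_\Lambda(i)\Bigr).$$
   Context: Jackson network with $d$ queues: arrival rates $\lambda_i\ge0$, service rates $\mu_i>0$, routing matrix $P=(p_{ij})_{i,j=1}^d$ nonnegative with $p_{ii}=0$, $\sum_jp_{ij}\le1$, $p_{i0}=1-\sum_jp_{ij}$. Hypothesis (A): the jump-rate kernel on $\mathbb{Z}^d$ (jumps $+\epsilon^i$ at rate $\lambda_i$, $-\epsilon^i$ at rate $\mu_ip_{i0}$, $\epsilon^j-\epsilon^i$ at rate $\mu_ip_{ij}$) is irreducible (equivalently spectral radius of $P$ $<1$ and for every $i$ some $\lambda_jp^{(n)}_{ji}>0$); then the traffic equations $\nu_j=\lambda_j+\sum_i\nu_ip_{ij}$ have a unique solution. $G=(I-P)^{-1}$. $Q_{ij}$: probability that the chain on $\{0,\dots,d\}$ with transitions $p_{ij}$ ($0$ absorbing)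 started at $i$ ever visits $j$ (time $0$ included). For $\Lambda\subset\{1,\dots,d\}$ and $\alpha\in\mathbb{R}^d$, $$R_\Lambda(\alpha)=\sum_{j=1}^d\lambda_j(e^{\alpha^j}-1)+\sum_{j\in\Lambda}\mu_j\Bigl(\sum_{k=1}^dp_{jk}e^{\alpha^k-\alpha^j}+p_{j0}e^{-\alpha^j}-1\Bigr).$$ *)

From HB Require Import structures.
From mathcomp Require Import all_boot all_order all_algebra.
From mathcomp Require Import all_classical all_reals all_analysis.
Set Implicit Arguments. Unset Strict Implicit. Unset Printing Implicit Defensive.
Import Order.TTheory GRing.Theory Num.Theory numFieldNormedType.Exports.
Local Open Scope ring_scope.

Section Jackson.
Variables (R : realType) (d : nat).
Variables (lam mu : 'I_d -> R) (P : 'M[R]_d).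

Definition p0 (i : 'I_d) : R := 1 - \sum_(j < d) P i j.

Definition jackson_params : Prop :=
  (forall i, 0 <= lam i) /\ (forall i, 0 < mu i) /\
  (forall i j, 0 <= P i j) /\ (forall i, P i i = 0) /\
  (forall i, \sum_(j < d) P i j <= 1).

Definition unitv (i : 'I_d) : 'I_d -> int := fun k => (k == i)%:R.

Definition pos_jump (v : 'I_d -> int) : Prop :=
  (exists i, v =1 unitv i /\ 0 < lam i) \/
  (exists i, v =1 (fun k => - unitv i k) /\ 0 < mu i * p0 i) \/
  (exists i j, v =1 (fun k => unitv j k - unitv i k) /\ 0 < mu i * P i j).

(* Hypothesis (A): the jump-rate kernel on Z^d is irreducible: every y is
   reachable from every x by a finite path of positive-rate jumps. *)
Definition hypA : Prop :=
  forall x y : 'I_d -> int, exists (n : nat) (v : nat -> 'I_d -> int),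
    (forall m, (m < n)%N -> pos_jump (v m)) /\
    (forall k, y k = x k + \sum_(m < n) v m k).

(* hitn j n i = probability that the chain on {0,...,d} with transitions p_ij
   (0 absorbing) started at i visits j at some time in {0,...,n}. *)
Fixpoint hitn (j : 'I_d) (n : nat) (i : 'I_d) : R :=
  match n with
  | O => (i == j)%:R
  | n'.+1 => if i == j then 1 else \sum_(k < d) P i k * hitn j n' k
  end.

Definition Q (i j : 'I_d) : R := limn (fun n => hitn j n i).

Definition G : 'M[R]_d := invmx (1%:M - P).

Definition traffic (nu : 'I_d -> R) : Prop :=
  forall j, nu j = lam j + \sum_(i < d) nu i * P i j.

Definition RL (L : {set 'I_d}) (alpha : 'I_d -> R) : R :=
  \sum_(j < d) lam j * (expR (alpha j) - 1) +
  \sum_(j in L) mu j * (\sum_(k < d) P j k * expR (alpha k - alpha j)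
                        + p0 j * expR (- alpha j) - 1).

Definition alpha_system (i : 'I_d) (s : R) (alpha : 'I_d -> R) : Prop :=
  expR (alpha i) = 1 + s /\
  forall j, j != i ->
    expR (alpha j) = \sum_(k < d) P j k * expR (alpha k) + p0 j.

Definition alpha_sol (i : 'I_d) (s : R) : 'I_d -> R :=
  fun j => if j == i then ln (1 + s) else ln (1 + Q j i * s).

End Jackson.

From HB Require Import structures.
From mathcomp Require Import all_boot all_order all_algebra.
From mathcomp Require Import all_classical all_reals all_analysis.
From mathcomp Require Import ring lra.
Import Order.TTheory GRing.Theory Num.Theory numFieldNormedType.Exports.
Local Open Scope classical_set_scope.
Local Open Scope ring_scope.

(* Everything rests on one uniqueness principle: a function that is
   P-harmonic off i and vanishes at i is zero.  By the maximum principle a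
   positive maximum of a P-subharmonic function spreads to a set S of queues
   such that no positive-rate jump lowers the number of customers in S;
   irreducibility (A) forbids such a trap, since the network must be able to
   go from one customer in S to the empty configuration.
   Then k |-> 1 + Q_ki s solves the Dirichlet problem defining exp(alpha(s))
   (Q_.i is harmonic off i with Q_ii = 1), and the same uniqueness gives
   G_ki = Q_ki G_ii and hence 1 - sum_k p_ik Q_ki = 1/G_ii.  In R_Lambda the
   service term of every j <> i vanishes by the j-th equation, and
   nu = lambda G turns the arrival term into s nu_i / G_ii. *)

Lemma sum_supported1 (S : pzSemiRingType) (T : finType) (A : pred T) a
    (F : T -> S) :
  (forall j, j != a -> F j = 0) -> \sum_(j | A j) F j = (A a)%:R * F a.
Proof.
move=> F_eq0; rewrite big_mkcond (bigD1 a) //= big1 ?addr0 => [|j ja].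
  by case: (A a); rewrite ?mul1r ?mul0r.
by rewrite F_eq0 ?if_same.
Qed.

Section Jackson.
Variables (R : realType) (d : nat) (lam mu : 'I_d -> R) (P : 'M[R]_d).
Hypothesis P_ge0 : forall j k, 0 <= P j k.
Hypothesis P_rowsum_le1 : forall j, \sum_(k < d) P j k <= 1.
Hypothesis irreducible : hypA lam mu P.

Lemma p0_ge0 j : 0 <= p0 P j.
Proof. by rewrite subr_ge0. Qed.

Lemma sum_unitv (S : pred 'I_d) c : \sum_(k | S k) unitv c k = (S c)%:R.
Proof.
rewrite (@sum_supported1 _ _ _ c) => [|k kc]; rewrite /unitv ?eqxx ?mulr1 //.
by rewrite (negbTE kc).
Qed.

Lemma irreducible_no_trap (S : pred 'I_d) :
  (forall v, pos_jump lam mu P v -> 0 <= \sum_(k | S k) v k) -> forall k, ~~ S k.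
Proof.
move=> trap k; apply/negP => Sk.
have [n [v [v_jump v_sum]]] := irreducible (unitv k) (fun _ => 0).
have : (0 : int) = \sum_(j | S j) unitv k j + \sum_(t < n) \sum_(j | S j) v t j.
  by rewrite exchange_big -big_split big1 // => j _; rewrite [RHS](v_sum j).
have : 0 <= \sum_(t < n) \sum_(j | S j) v t j.
  by apply: sumr_ge0 => t _; apply: trap; apply: v_jump.
by rewrite sum_unitv Sk => mass_ge0 /eqP; rewrite eq_sym paddr_eq0 ?oner_eq0.
Qed.

Lemma max_subaverage_closed (y : 'I_d -> R) k :
  (forall l, y l <= y k) -> 0 < y k -> y k <= \sum_l P k l * y l ->
  p0 P k = 0 /\ forall l, P k l != 0 -> y l = y k.
Proof.
move=> y_max y_pos y_sub.
have term_ge0 l : 0 <= P k l * (y k - y l) by rewrite mulr_ge0 ?subr_ge0.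
have flow_ge0 : 0 <= \sum_l P k l * (y k - y l) by apply: sumr_ge0.
have exit_ge0 : 0 <= p0 P k * y k by rewrite mulr_ge0 ?p0_ge0 ?ltW.
have balance : \sum_l P k l * (y k - y l) + p0 P k * y k
               = y k - \sum_l P k l * y l.
  by rewrite /p0 (eq_bigr _ (fun l _ => mulrBr _ _ _)) sumrB -mulr_suml; ring.
have exit_eq0 : p0 P k * y k = 0 by lra.
have flow_eq0 : \sum_l P k l * (y k - y l) = 0 by lra.
split; first by move/eqP: exit_eq0; rewrite mulf_eq0 (gt_eqF y_pos) orbF => /eqP.
move=> l Pkl_neq0; have /eqP := psumr_eq0P (fun l _ => term_ge0 l) flow_eq0 (i := l) isT.
by rewrite mulf_eq0 (negbTE Pkl_neq0) subr_eq0 => /eqP.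
Qed.

Lemma subharmonic_le0 (y : 'I_d -> R) :
  (forall j, 0 < y j -> y j <= \sum_k P j k * y k) -> forall j, y j <= 0.
Proof.
move=> y_sub j0; rewrite leNgt; apply/negP => y_j0_pos.
pose m := [arg max_(k > j0) y k]%O.
have y_max k : y k <= y m by rewrite /m; case: arg_maxP => //= a _; apply.
have y_m_pos : 0 < y m := lt_le_trans y_j0_pos (y_max j0).
pose S k := y k == y m.
have S_closed k : S k -> p0 P k = 0 /\ forall l, P k l != 0 -> S l.
  move=> /eqP y_k; rewrite -y_k in y_m_pos.
  have [] := @max_subaverage_closed y k _ y_m_pos (y_sub _ y_m_pos).
    by move=> l; rewrite y_k.
  by move=> exit_eq0 flow; split => // l /flow; rewrite /S y_k => ->.
have trap v : pos_jump lam mu P v -> 0 <= \sum_(k | S k) v k.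
  case=> [[a [va _]] | [[a [va rate]] | [a [b [va rate]]]]];
    rewrite (eq_bigr _ (fun k _ => va k)) ?sumrN ?sumrB !sum_unitv.
  - by rewrite ler0n.
  - case Sa: (S a); last by rewrite oppr0.
    by move: rate; rewrite (S_closed a Sa).1 mulr0 ltxx.
  - case Sa: (S a); last by rewrite subr0 ler0n.
    rewrite ((S_closed a Sa).2 b) ?subrr //.
    by apply: contraTneq rate => ->; rewrite mulr0 ltxx.
by have := @irreducible_no_trap S trap m; rewrite /S eqxx.
Qed.

Lemma harmonic_eq0 (A : pred 'I_d) (y : 'I_d -> R) :
  (forall j, ~~ A j -> y j = 0) ->
  (forall j, A j -> y j = \sum_k P j k * y k) -> forall j, y j = 0.
Proof.
have le0 z : (forall j, ~~ A j -> z j = 0) ->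
    (forall j, A j -> z j = \sum_k P j k * z k) -> forall j, z j <= 0.
  move=> z_out z_harm; apply: subharmonic_le0 => j z_pos.
  have Aj : A j by apply: contraTT z_pos => /z_out ->; rewrite ltxx.
  by rewrite -z_harm.
move=> y_out y_harm j; apply/eqP; rewrite eq_le le0 //= -oppr_le0.
apply: (le0 (fun k => - y k)) => [k /y_out -> | k /y_harm ->]; first by rewrite oppr0.
by rewrite -sumrN; apply: eq_bigr => l _; rewrite mulrN.
Qed.

Lemma dirichlet_unique i (c y z : 'I_d -> R) : y i = z i ->
  (forall j, j != i -> y j = \sum_k P j k * y k + c j) ->
  (forall j, j != i -> z j = \sum_k P j k * z k + c j) -> y =1 z.
Proof.
move=> yz_i y_eq z_eq j; apply/eqP; rewrite -subr_eq0; apply/eqP.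
apply: (@harmonic_eq0 (predC1 i) (fun k => y k - z k)) => [k|k ki] /=.
  by rewrite negbK => /eqP ->; rewrite yz_i subrr.
rewrite y_eq // z_eq // (eq_bigr _ (fun l _ => mulrBr _ _ _)) sumrB; ring.
Qed.

Lemma unitmx_I_sub : (1%:M - P) \in unitmx.
Proof.
rewrite -unitmx_tr -row_free_unit -kermx_eq0 -submx0; apply/row_subP => r.
set u := row r _.
have : u *m (1%:M - P)^T = 0 by apply/sub_kermxP; exact: row_sub.
rewrite raddfB /= trmx1 mulmxBr mulmx1 => /subr0_eq u_fix.
rewrite submx0; apply/eqP/rowP => j; rewrite [RHS]mxE.
apply: (@harmonic_eq0 predT (u 0)) => // {}j _.
by rewrite {1}u_fix mxE; apply: eq_bigr => k _; rewrite !mxE mulrC.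
Qed.

Lemma G_fixpoint j i : G P j i = (j == i)%:R + \sum_k P j k * G P k i.
Proof.
have /matrixP/(_ j i) := mulmxV unitmx_I_sub.
by rewrite mulmxBl mul1mx !mxE => <-; rewrite subrK.
Qed.

Lemma traffic_G nu : traffic lam P nu -> forall i, nu i = \sum_j lam j * G P j i.
Proof.
move=> nu_traffic i.
have nu_IP : \row_j nu j *m (1%:M - P) = \row_j lam j.
  apply/rowP => j; rewrite mulmxBr mulmx1 !mxE [nu j]nu_traffic.
  by rewrite [X in _ - X](eq_bigr (fun k => nu k * P k j)) ?addrK // => k _; rewrite mxE.
have := congr1 (fun w : 'rV_d => (w *m G P) 0 i) nu_IP.
rewrite /G mulmxK ?unitmx_I_sub // !mxE => ->.
by apply: eq_bigr => j _; rewrite mxE.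
Qed.

Lemma hitn_bounds i n k : 0 <= hitn P i n k <= 1.
Proof.
elim: n k => [|n IH] k /=; first by case: (k == i); rewrite /= ?lexx ?ler01.
case: eqP => _; first by rewrite ler01 lexx.
apply/andP; split.
  by apply: sumr_ge0 => l _; rewrite mulr_ge0 //; case/andP: (IH l).
apply: le_trans (P_rowsum_le1 k); apply: ler_sum => l _.
by rewrite ler_piMr //; case/andP: (IH l).
Qed.

Lemma hitn_nondecreasing i k : nondecreasing_seq (fun n => hitn P i n k).
Proof.
apply/nondecreasing_seqP => n; elim: n k => [|n IH] k /=; case: eqP => // _.
  by apply: sumr_ge0 => l _; rewrite mulr_ge0 //; case/andP: (hitn_bounds i 0 l).
by apply: ler_sum => l _; apply: ler_wpM2l.
Qed.

Lemma hitn_cvg i k : hitn P i n k @[n --> \oo] --> Q P k i.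
Proof.
apply: nondecreasing_is_cvgn; first exact: hitn_nondecreasing.
by exists 1 => _ [n _ <-]; case/andP: (hitn_bounds i n k).
Qed.

Lemma Q_bounds i k : 0 <= Q P k i <= 1.
Proof.
apply/andP; split; [apply: limr_ge | apply: limr_le];
  (try exact: hitn_cvg); by apply: nearW => n; case/andP: (hitn_bounds i n k).
Qed.

Lemma Q_diag i : Q P i i = 1.
Proof.
rewrite /Q (_ : (fun n => hitn P i n i) = fun=> 1) ?lim_cst //.
by apply/funext; case=> [|n] /=; rewrite eqxx.
Qed.

Lemma Q_harmonic i j : j != i -> Q P j i = \sum_k P j k * Q P k i.
Proof.
move=> ji; apply: cvg_lim => //; rewrite -cvg_shiftS /=.
under eq_cvg do rewrite /= (negbTE ji).
apply: cvg_big => [|k _]; first exact: add_continuous.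
by apply: cvgM; [exact: cvg_cst | exact: hitn_cvg].
Qed.

Lemma G_col_Q i k : G P k i = Q P k i * G P i i.
Proof.
apply: (@dirichlet_unique i (fun=> 0) (fun k => G P k i) (fun k => Q P k i * G P i i))
  => [|j ji|j ji] /=; first by rewrite Q_diag mul1r.
  by rewrite G_fixpoint (negbTE ji) add0r addr0.
by rewrite Q_harmonic // mulr_suml addr0; apply: eq_bigr => l _; rewrite mulrA.
Qed.

Lemma G_diag_escape i : G P i i * (1 - \sum_k P i k * Q P k i) = 1.
Proof.
have := G_fixpoint i i; rewrite eqxx.
under eq_bigr do rewrite G_col_Q mulrA.
by rewrite -mulr_suml mulrBr mulr1 => {1}-> /=; ring.
Qed.

Lemma G_diag_neq0 i : G P i i != 0.
Proof.
by apply: contra_eq_neq (G_diag_escape i) => ->; rewrite mul0r eq_sym oner_neq0.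
Qed.

Lemma return_probE i : \sum_k P i k * Q P k i = 1 - (G P i i)^-1.
Proof.
have := G_diag_escape i; have := G_diag_neq0 i => G_neq0 escape.
apply: (mulfI G_neq0); rewrite mulrBr mulfV // mulr1 -[in RHS]escape; ring.
Qed.

Lemma traffic_Q nu i :
  traffic lam P nu -> nu i = G P i i * \sum_j lam j * Q P j i.
Proof.
move=> /traffic_G ->; rewrite mulr_sumr; apply: eq_bigr => j _.
by rewrite G_col_Q; ring.
Qed.

Lemma sum_P_affine j (x : 'I_d -> R) t :
  \sum_k P j k * (1 + x k * t) + p0 P j = 1 + (\sum_k P j k * x k) * t.
Proof.
rewrite /p0 mulr_suml (eq_bigr (fun k => P j k + P j k * x k * t)) => [|k _].
  by rewrite big_split /=; ring.
by rewrite mulrDr mulr1 mulrA.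
Qed.

Lemma jump_term_expR (alpha : 'I_d -> R) j :
  \sum_k P j k * expR (alpha k - alpha j) + p0 P j * expR (- alpha j) - 1
  = (\sum_k P j k * expR (alpha k) + p0 P j) / expR (alpha j) - 1.
Proof.
rewrite expRN [in RHS]mulrDl mulr_suml; congr (_ + _ - _).
by apply: eq_bigr => k _; rewrite expRB mulrA.
Qed.

Section Solution.
Variables (i : 'I_d) (s : R).
Hypothesis s_gtN1 : -1 < s.

Lemma one_add_Q_mul_gt0 k : 0 < 1 + Q P k i * s.
Proof.
have := s_gtN1; have /andP[Q_ge0 Q_le1] := Q_bounds i k.
by case: (lerP 0 s); nra.
Qed.

Lemma expR_alpha_sol k : expR (alpha_sol P i s k) = 1 + Q P k i * s.
Proof.
rewrite /alpha_sol; case: eqP => [->|_]; last by rewrite lnK // posrE one_add_Q_mul_gt0.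
have := one_add_Q_mul_gt0 i; rewrite Q_diag mul1r => s1_gt0.
by rewrite lnK // posrE.
Qed.

Lemma alpha_sol_system : alpha_system P i s (alpha_sol P i s).
Proof.
split=> [|j ji]; first by rewrite expR_alpha_sol Q_diag mul1r.
under eq_bigr do rewrite expR_alpha_sol.
by rewrite expR_alpha_sol sum_P_affine -Q_harmonic.
Qed.

Lemma alpha_systemP alpha : alpha_system P i s alpha <-> alpha =1 alpha_sol P i s.
Proof.
split=> [[alpha_i alpha_j] k | /funext ->]; last exact: alpha_sol_system.
have [sol_i sol_j] := alpha_sol_system.
apply: expR_inj; move: k; apply: (@dirichlet_unique i (p0 P)) => //=.
by rewrite alpha_i sol_i.
Qed.

Lemma RL_alpha_sol nu (L : {set 'I_d}) : traffic lam P nu ->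
  RL lam mu P L (alpha_sol P i s) =
  s / G P i i * (nu i - mu i / (1 + s) * (i \in L)%:R).
Proof.
move=> nu_traffic; have [sol_i sol_j] := alpha_sol_system.
have arrivals : \sum_j lam j * (expR (alpha_sol P i s j) - 1)
                = s * \sum_j lam j * Q P j i.
  by rewrite mulr_sumr; apply: eq_bigr => j _; rewrite expR_alpha_sol; ring.
have services : \sum_(j in L) mu j * (\sum_k P j k *
      expR (alpha_sol P i s k - alpha_sol P i s j)
      + p0 P j * expR (- alpha_sol P i s j) - 1)
    = (i \in L)%:R * (mu i * ((1 + (1 - (G P i i)^-1) * s) / (1 + s) - 1)).
  under eq_bigr do rewrite jump_term_expR.
  rewrite (@sum_supported1 _ _ _ i) => [|j ji]; last first.
    by rewrite -sol_j // divff ?subrr ?mulr0 // gt_eqF ?expR_gt0.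
  rewrite sol_i; under eq_bigr do rewrite expR_alpha_sol.
  by rewrite sum_P_affine return_probE.
have G_neq0 := G_diag_neq0 i.
have : 1 + s != 0 by have := one_add_Q_mul_gt0 i; rewrite Q_diag mul1r => /gt_eqF ->.
rewrite /RL arrivals services (@traffic_Q nu i nu_traffic) => s1_neq0.
by field; rewrite G_neq0 s1_neq0.
Qed.

End Solution.

End Jackson.

Theorem lemma4p1 (R : realType) (d : nat) (lam mu : 'I_d -> R) (P : 'M[R]_d)
  (nu : 'I_d -> R) :
  jackson_params lam mu P -> hypA lam mu P -> traffic lam P nu ->
  forall (i : 'I_d) (s : R), -1 < s ->
    (forall alpha : 'I_d -> R,
        alpha_system P i s alpha <-> alpha =1 alpha_sol P i s) /\
    (forall L : {set 'I_d},
        RL lam mu P L (alpha_sol P i s) =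
        s / G P i i * (nu i - mu i / (1 + s) * (i \in L)%:R)).
Proof.
move=> [_ [_ [P_ge0 [_ P_rowsum_le1]]]] irreducible nu_traffic i s s_gtN1.
split=> [alpha | L].
  exact: (@alpha_systemP _ _ _ _ _ P_ge0 P_rowsum_le1 irreducible i _ s_gtN1).
exact: (@RL_alpha_sol _ _ _ _ _ P_ge0 P_rowsum_le1 irreducible i _ s_gtN1 _ L
  nu_traffic).
Qed.
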